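(* Let $\bm\mu^N\in\mathcal P(\mathcal X^N)$, $N\in\mathbb N$, and $\mathbb M\in\mathcal P(\mathcal P(\mathcal X))$ be such that $L^N_\#\bm\mu^N\rightharpoonup\mathbb M$ weakly as $N\to\infty$. Then $$\liminf_{N\to\infty}\frac1N\mathcal H(\bm\mu^N\mid\bm\pi^N)\ge\int_{\mathcal P(\mathcal X)}(\mathcal F(\nu)-\mathcal F_0)\,\mathbb M(d\nu)=\mathbb F(\mathbb M)-\mathcal F_0,\qquad \mathcal F_0:=\inf_{\mu\in\mathcal P(\mathcal X)}\mathcal F(\mu).$$
   Context: $\mathcal X=\{1,\dots,d\}$ finite, $\mathcal P(\mathcal X)\subset\mathbb R^{\mathcal X}$. $K:\mathcal P(\mathcal X)\times\mathcal X\to\mathbb R$ with each $K_x$ twice continuously differentiable on a neighbourhood of $\mathcal P(\mathcal X)$; $U(\mu)=\sum_x\mu_xK_x(\mu)$; $\mathcal F(\mu)=\sum_x\mu_x\log\mu_x+U(\mu)$ (with $0\log0=0$); $\mathbb F(\mathbb M)=\int\mathcal F\,d\mathbb M$. For $\bm x\in\mathcal X^N$, $L^N(\bm x)=\frac1N\sum_{i=1}^N\delta_{x_i}\in\mathcal P(\mathcal X)$, and $L^N_\#\bm\mu$ is the push-forward of $\bm\mu\in\mathcal P(\mathcal X^N)$. $\bm\pi^N_{\bm x}=\exp(-NU(L^N\bm x))/\bm Z^N$ with $\bm Z^N=\sum_{\bm x}\exp(-NU(L^N\bm x))$. $\mathcal H(\bm\mu\mid\bm\pi)=\sum_{\bm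 x}\bm\mu_{\bm x}\log(\bm\mu_{\bm x}/\bm\pi_{\bm x})$. *)

From HB Require Import structures.
From mathcomp Require Import all_boot all_order all_algebra.
From mathcomp Require Import all_classical all_reals all_analysis.
Set Implicit Arguments.
Unset Strict Implicit.
Unset Printing Implicit Defensive.
Import Order.TTheory GRing.Theory Num.Theory.
Import numFieldNormedType.Exports.
Local Open Scope ring_scope.
Local Open Scope classical_set_scope.

(* X = {1,...,d} is modelled by 'I_d; R^X by row vectors 'rV[R]_d
   (mu 0 x is the x-coordinate of mu). *)

Section Defs.
Context (R : realType) (d : nat).

Definition Pspace : set 'rV[R]_d :=
  [set mu | (forall x, 0 <= mu 0 x) /\ \sum_(x < d) mu 0 x = 1].

(* Borel sigma-algebra on R^X (generated by the open sets); probability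
   measures on P(X) are the Borel probabilities on R^X concentrated on P(X). *)
Definition borelRd := g_sigma_algebraType (fun A : set 'rV[R]_d => open A).

Definition is_prob (T : finType) (m : T -> R) :=
  (forall t, 0 <= m t) /\ \sum_t m t = 1.

Definition empirical (N : nat) (x : {ffun 'I_N -> 'I_d}) : 'rV[R]_d :=
  \row_(y < d) ((N%:R)^-1 * \sum_(i < N) ((x i == y)%:R)).

Definition Ufun (K : 'rV[R]_d -> 'I_d -> R) (mu : 'rV[R]_d) : R :=
  \sum_(x < d) mu 0 x * K mu x.

(* F(mu) = sum_x mu_x log mu_x + U(mu)   (ln 0 = 0, so 0 log 0 = 0) *)
Definition Ffun (K : 'rV[R]_d -> 'I_d -> R) (mu : 'rV[R]_d) : R :=
  \sum_(x < d) mu 0 x * ln (mu 0 x) + Ufun K mu.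

Definition F0 (K : 'rV[R]_d -> 'I_d -> R) : R := inf [set Ffun K mu | mu in Pspace].

Definition gibbsZ (K : 'rV[R]_d -> 'I_d -> R) (N : nat) : R :=
  \sum_(x : {ffun 'I_N -> 'I_d}) expR (- (N%:R * Ufun K (empirical x))).

Definition gibbs (K : 'rV[R]_d -> 'I_d -> R) (N : nat) (x : {ffun 'I_N -> 'I_d}) : R :=
  expR (- (N%:R * Ufun K (empirical x))) / gibbsZ K N.

Definition C2_on (O : set 'rV[R]_d) (f : 'rV[R]_d -> R) : Prop :=
  (forall v, O v -> {for v, continuous f}) /\
  forall (i j : 'I_d) v, O v ->
    [/\ derivable f v 'e_i,
        {for v, continuous (fun w => 'D_'e_i f w)},
        derivable (fun w => 'D_'e_i f w) v 'e_j &
        {for v, continuous (fun w => 'D_'e_j (fun u => 'D_'e_i f u) w)}].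

(* weak convergence L^N_# mu^N -> M: for every bounded continuous
   phi : P(X) -> R, int phi d(L^N_# mu^N) = sum_x mu^N_x phi(L^N x)
   converges to int phi dM. *)
Definition weak_cvg_pushforward (mu : forall N : nat, {ffun 'I_N -> 'I_d} -> R)
    (M : probability borelRd R) : Prop :=
  forall phi : 'rV[R]_d -> R,
    {within Pspace, continuous phi} ->
    (exists C : R, forall nu, Pspace nu -> `|phi nu| <= C) ->
    (fun N => (\sum_(x : {ffun 'I_N -> 'I_d}) mu N x * phi (empirical x))%:E)
      @ \oo --> (\int[M]_(nu in (Pspace : set borelRd)) (phi nu)%:E)%E.

End Defs.

Definition rel_entropy (R : realType) (T : finType) (m p : T -> R) : R :=
  \sum_t m t * ln (m t / p t).

From HB Require Import structures.
From mathcomp Require Import all_boot all_order all_algebra.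
From mathcomp Require Import all_classical all_reals all_analysis.
From mathcomp Require Import ring lra.
Import Order.TTheory GRing.Theory Num.Theory.
Import numFieldNormedType.Exports.
Local Open Scope ring_scope.
Local Open Scope classical_set_scope.

(* The relative entropy splits as
     H(mu | pi^N) = sum mu log mu + N E_mu[U(L^N x)] + log Z^N.
   Gibbs' inequality against x |-> prod_i L^N(x)_(x_i), whose total mass is at most
   (N+1)^d because there are at most that many empirical measures, gives
     sum mu log mu >= N E_mu[E(L^N x)] - d log (N+1),   E(nu) := sum_x nu_x log nu_x.
   Gibbs' inequality against the product measure v^N gives
     log Z^N >= - N E(v) - N E_(v^N)[U(L^N x)],
   and since L^N x has variance at most 1/N around v under v^N while U is continuous
   and bounded on the simplex, E_(v^N)[U(L^N x)] <= U(v) + eps + C d / N.  Hence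
     H(mu | pi^N) / N >= E_mu[F(L^N x)] - F(v) - eps - (d log (N+1) + C d) / N
   for every v; taking F(v) close to F_0 and letting N -> oo along the weak
   convergence of L^N_# mu^N (F is bounded and continuous on the simplex) concludes. *)

Section real_facts.
Context {R : realType}.

Lemma ln_le_mul (y e : R) : 0 < e -> 2 / e ^+ 2 <= y -> ln y <= e * y.
Proof.
move=> e0 hy.
have e20 : 0 < e ^+ 2 by rewrite exprn_gt0.
have y0 : 0 < y by apply: lt_le_trans hy; rewrite divr_gt0.
have ey0 : 0 < e * y by rewrite mulr_gt0.
rewrite -[leRHS]expRK ler_ln ?posrE ?expR_gt0 //.
apply: le_trans (expR_ge1Dxn 1 (ltW ey0)); apply: ler_wpDl => //.
have h2 : 2 <= y * e ^+ 2 by rewrite -ler_pdivrMr.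
rewrite [X in _ / X](_ : _ = 2) // ler_pdivlMr // mulrC.
have -> : (e * y) ^+ 2 = y * (y * e ^+ 2) by ring.
by rewrite [leLHS]mulrC ler_wpM2l // ltW.
Qed.

Lemma normr_xlnx_le (t e : R) : 0 < t <= 1 -> 0 < e -> 2 * t <= e ^+ 2 ->
  `|t * ln t| <= e.
Proof.
move=> /andP[t0 t1] e0 te.
have ti0 : 0 < t^-1 by rewrite invr_gt0.
have lnti : ln t^-1 <= e * t^-1.
  apply: ln_le_mul => //.
  rewrite ler_pdivrMr ?exprn_gt0 // -(ler_pM2l t0) mulrA mulfV ?lt0r_neq0 //.
  by rewrite mul1r mulrC.
rewrite ler0_norm; last by rewrite mulr_ge0_le0 ?ln_le0 // ltW.
rewrite -mulrN -lnV ?posrE //.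
by rewrite -(ler_pM2l ti0) mulKf ?lt0r_neq0 // mulrC.
Qed.

(* [ln] vanishes on nonpositive reals, so only continuity at [0] needs an argument *)
Lemma continuous_xlnx : continuous (fun t : R => t * ln t).
Proof.
move=> t0; have [t0p|t0n] := ltP 0 t0.
  by apply: continuousM; [exact: cvg_id|exact: continuous_ln].
apply/cvgrPdist_lt => e e0.
set de := Num.min 1 (e ^+ 2 / 8).
have de0 : 0 < de by rewrite lt_min ltr01 /= divr_gt0 // exprn_gt0.
have := @cvg_id _ (nbhs t0); move/cvgrPdist_lt/(_ de de0).
apply: filterS => t Ht.
rewrite (ln0 t0n) mulr0 sub0r normrN.
have [tp|tn] := ltP 0 t; last by rewrite (ln0 tn) mulr0 normr0.
have tde : t < de.
  have := ler_norm (t - t0); rewrite distrC in Ht; lra.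
have de1 : de <= 1 by rewrite ge_min lexx.
have de8 : de <= e ^+ 2 / 8 by rewrite ge_min lexx orbT.
apply: (le_lt_trans (@normr_xlnx_le t (e / 2) _ _ _)).
- by rewrite tp /= ltW // (lt_le_trans tde).
- by rewrite divr_gt0.
- have -> : (e / 2) ^+ 2 = e ^+ 2 / 4 by field.
  lra.
- lra.
Qed.

Lemma continuous_sum (T : topologicalType) (I : finType) (f : I -> T -> R) (v : T) :
  (forall i, {for v, continuous (f i)}) ->
  {for v, continuous (fun w => \sum_i f i w)}.
Proof.
move=> fc; suff : forall s, {for v, continuous (fun w => \sum_(i <- s) f i w)} by apply.
elim => [|i s IH].
  rewrite (_ : (fun w => _) = cst 0); first exact: cst_continuous.
  by apply/funext => w; rewrite big_nil.
rewrite (_ : (fun w => _) = f i + fun w => \sum_(j <- s) f j w); first exact: continuousD.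
by apply/funext => w; rewrite big_cons.
Qed.

Lemma mul_ln_le (r s : R) : 0 <= r -> 0 <= s -> (0 < r -> 0 < s) ->
  r * ln s <= r * ln r + (s - r).
Proof.
move=> r0 s0 rs; have [rp|] := ltP 0 r; last first.
  move=> r0'; have -> : r = 0 by apply/eqP; rewrite eq_le r0' r0.
  by rewrite !mul0r add0r subr0.
have sp := rs rp.
have : ln (s / r) <= s / r - 1.
  have := @le_ln1Dx _ (s / r - 1); rewrite addrCA subrr addr0; apply.
  by rewrite ltrBrDl subrr divr_gt0.
rewrite ln_div ?posrE // -(ler_pM2l rp).
have -> : r * (s / r - 1) = s - r by field; exact: lt0r_neq0.
lra.
Qed.

Lemma gibbs_inequality {T : finType} {r s : T -> R} :
  is_prob r -> (forall t, 0 <= s t) -> (forall t, 0 < r t -> 0 < s t) ->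
  \sum_t s t <= 1 ->
  \sum_t r t * ln (s t) <= \sum_t r t * ln (r t).
Proof.
move=> [r0 r1] s0 rs s1.
apply: (@le_trans _ _ (\sum_t (r t * ln (r t) + (s t - r t)))).
  by apply: ler_sum => t _; exact: mul_ln_le (r0 t) (s0 t) (rs t).
rewrite big_split /= sumrB r1; lra.
Qed.

Lemma is_probW (T : finType) (r : T -> R) : is_prob r -> exists t, 0 < r t.
Proof.
move=> [r0 r1]; apply/not_existsP => rle0.
have : \sum_t r t = 0.
  by apply: big1 => t _; apply/eqP; rewrite eq_le r0 andbT leNgt; apply/negP/rle0.
by rewrite r1 => /eqP; rewrite oner_eq0.
Qed.

Lemma ln_prod (I : Type) (s : seq I) (f : I -> R) :
  (forall i, 0 < f i) -> ln (\prod_(i <- s) f i) = \sum_(i <- s) ln (f i).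
Proof.
move=> fp; elim: s => [|i s IH]; first by rewrite !big_nil ln1.
by rewrite !big_cons lnM ?IH // posrE // prodr_gt0.
Qed.

Lemma log_remainder_small {a b eps : R} : 0 <= a -> 0 <= b -> 0 < eps ->
  \forall N \near \oo, (a * ln N.+1%:R + b) / N%:R <= eps.
Proof.
move=> a0 b0 eps0.
pose eta := eps / (4 * (a + 1)).
have eta0 : 0 < eta by rewrite divr_gt0 // mulr_gt0 // ltr_pwDr.
have aeta : a * eta <= eps / 4.
  have -> : eps / 4 = (a + 1) * eta by rewrite /eta; field; rewrite gt_eqF ?ltr_pwDr.
  by rewrite ler_pM2r // lerDl.
have etaX : 0 <= 2 / eta ^+ 2 by rewrite divr_ge0 // sqr_ge0.
have bX : 0 <= 2 * b / eps by rewrite divr_ge0 ?mulr_ge0 // ltW.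
pose X := 2 / eta ^+ 2 + 2 * b / eps.
exists (Num.truncn X).+1 => // N /= hN.
have n_gt_X : X < N%:R.
  by apply: lt_le_trans (truncnS_gt X) _; rewrite ler_nat.
have n_gt0 : (0 : R) < N%:R by rewrite /X in n_gt_X; lra.
have n1 : (1 : R) <= N%:R by rewrite ler1n -(ltr0n R).
have lnN : ln N.+1%:R <= eta * (N%:R + 1).
  by rewrite -natr1; apply: ln_le_mul => //; rewrite /X in n_gt_X; lra.
have hb : 2 * b / eps <= N%:R by rewrite /X in n_gt_X; lra.
rewrite ler_pdivrMr // in hb.
rewrite ler_pdivrMr //.
have : a * ln N.+1%:R <= a * eta * (N%:R + 1) by rewrite -mulrA ler_wpM2l.
nra.
Qed.

End real_facts.

Section liminf.
Context {R : realType}.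
Local Open Scope ereal_scope.

Lemma le_limn_einf {u v : (\bar R)^nat} :
  (\forall n \near \oo, u n <= v n) -> limn_einf u <= limn_einf v.
Proof.
move=> [N0 _ uv]; rewrite !limn_einf_lim.
apply: lee_lim; [exact: is_cvg_einfs|exact: is_cvg_einfs|].
exists N0 => // n /= n_ge; apply: le_ereal_inf_tmp => _ [k /= nk <-].
apply: le_trans (uv k _); last exact: leq_trans n_ge nk.
by apply: ereal_inf_lbound; exists k.
Qed.

Lemma limn_einf_ge_shift (a : R^nat) (l : \bar R) (c : R) (b : (\bar R)^nat) :
  (fun n => (a n)%:E) @ \oo --> l ->
  (forall e : R, (0 < e)%R -> \forall n \near \oo, (a n - (c + e))%:E <= b n) ->
  l - c%:E <= limn_einf b.
Proof.
move=> al ab; apply/lee_addgt0Pr => e e0.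
have shift_cvg : (fun n => (a n - (c + e))%:E) @ \oo --> l - (c + e)%:E.
  under eq_fun do rewrite EFinB.
  by apply: cvgeB => //; [rewrite fin_num_adde_defl|exact: cvg_cst].
have := le_limn_einf (ab e e0); rewrite (cvg_limn_einf_sup shift_cvg).1.
by rewrite EFinD oppeD // addeA leeBlDr.
Qed.

End liminf.

Section iid.
Context {R : realType} {T : finType} {N : nat}.
Implicit Types (p : T -> R) (x : {ffun 'I_N -> T}).

Definition iid p x : R := \prod_k p (x k).

Lemma iid_ge0 p x : (forall t, 0 <= p t) -> 0 <= iid p x.
Proof. by move=> p0; apply: prodr_ge0 => k _. Qed.

Lemma sum_iid_mul_prod p (H : 'I_N -> T -> R) :
  \sum_x iid p x * \prod_k H k (x k) = \prod_k \sum_t p t * H k t.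
Proof.
rewrite bigA_distr_bigA /=; apply: eq_bigr => x _; by rewrite -big_split.
Qed.

Lemma sum_iid {p} : \sum_t p t = 1 -> \sum_x iid p x = 1.
Proof.
move=> p1; rewrite /iid -(bigA_distr_bigA (fun (_ : 'I_N) t => p t)) /=.
by rewrite p1 prodr_const expr1n.
Qed.

Lemma sum_iid_marginal p (g : T -> R) i : \sum_t p t = 1 ->
  \sum_x iid p x * g (x i) = \sum_t p t * g t.
Proof.
move=> p1; have := sum_iid_mul_prod p (fun k t => if k == i then g t else 1).
rewrite (bigD1 i) //= eqxx [X in _ * X]big1 ?mulr1; last first.
  by move=> k /negbTE ki; rewrite -[RHS]p1; apply: eq_bigr => t _; rewrite ki mulr1.
move=> <-; apply: eq_bigr => x _; congr (_ * _).
by rewrite (bigD1 i) //= eqxx big1 ?mulr1 // => k /negbTE ->.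
Qed.

Lemma sum_iid_marginal2 p (g h : T -> R) i j : \sum_t p t = 1 -> i != j ->
  \sum_x iid p x * (g (x i) * h (x j)) =
  (\sum_t p t * g t) * (\sum_t p t * h t).
Proof.
move=> p1 ij.
pose H k t := (if k == i then g t else 1) * (if k == j then h t else 1).
have HE x : \prod_k H k (x k) = g (x i) * h (x j).
  rewrite big_split /= (bigD1 i) //= eqxx big1 ?mulr1; last by move=> k /negbTE ->.
  by rewrite (bigD1 j) //= eqxx big1 ?mulr1 // => k /negbTE ->.
rewrite -(eq_bigr _ (fun x _ => congr1 (GRing.mul (iid p x)) (HE x))).
rewrite sum_iid_mul_prod (bigD1 i) //= (bigD1 j) /=; last by rewrite eq_sym.
rewrite [X in _ * (_ * X)]big1 ?mulr1; last first.
  move=> k /andP[ki kj]; rewrite -[RHS]p1; apply: eq_bigr => t _.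
  by rewrite /H (negbTE ki) (negbTE kj) !mulr1.
congr (_ * _); apply: eq_bigr => t _; rewrite /H eqxx.
  by rewrite (negbTE ij) mulr1.
by rewrite eq_sym (negbTE ij) mul1r.
Qed.

Lemma sum_iid_mul_ln {p} : is_prob p ->
  \sum_x iid p x * ln (iid p x) = N%:R * \sum_t p t * ln (p t).
Proof.
move=> [p0 p1].
have iidE x : iid p x * ln (iid p x) = iid p x * \sum_k ln (p (x k)).
  have [/forallP pos|/forallPn [k pk0]] := boolP [forall k, 0 < p (x k)].
    by rewrite /iid ln_prod.
  have pk : p (x k) = 0 by apply/eqP; rewrite eq_le p0 andbT leNgt.
  by rewrite /iid (bigD1 k) //= pk !mul0r.
under eq_bigr do rewrite iidE mulr_sumr.
rewrite exchange_big /= (eq_bigr (fun _ => \sum_t p t * ln (p t))).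
  by rewrite sumr_const card_ord mulr_natl.
by move=> k _; exact: sum_iid_marginal.
Qed.

Lemma is_prob_iid {p} : is_prob p -> is_prob (iid p).
Proof. by move=> [p0 p1]; split=> [x|]; [exact: iid_ge0|exact: sum_iid]. Qed.

Lemma sum_iid_sqr_sum p (a : T -> R) : \sum_t p t = 1 -> \sum_t p t * a t = 0 ->
  \sum_x iid p x * (\sum_i a (x i)) ^+ 2 = N%:R * \sum_t p t * a t ^+ 2.
Proof.
move=> p1 pa0.
have sqE x : iid p x * (\sum_i a (x i)) ^+ 2 =
    \sum_i \sum_j iid p x * (a (x i) * a (x j)).
  rewrite expr2 mulr_suml mulr_sumr; apply: eq_bigr => i _.
  by rewrite mulr_sumr mulr_sumr.
rewrite (eq_bigr _ (fun x _ => sqE x)) exchange_big /=.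
rewrite mulr_natl -[in RHS](card_ord N) -sumr_const; apply: eq_bigr => i _.
rewrite exchange_big (bigD1 i) //= [X in _ + X]big1 ?addr0 => [|j ji].
  by under eq_bigr do rewrite -expr2; exact: sum_iid_marginal.
by rewrite sum_iid_marginal2 // ?pa0 ?mul0r // eq_sym.
Qed.

End iid.

Section simplex.
Context {R : realType} {d : nat}.
Implicit Types (v w : 'rV[R]_d).

Lemma Pspace_le1 v y : Pspace v -> v 0 y <= 1.
Proof. by move=> [v0 <-]; rewrite (bigD1 y) //= lerDl sumr_ge0. Qed.

Lemma compact_Pspace : compact (@Pspace R d).
Proof.
apply: bounded_closed_compact.
  exists 1; split => // M M1 v Pv; change (mx_norm v <= M); rewrite mx_normrE.
  apply: bigmax_le => [|[i j] _ /=]; first by rewrite ltW // (lt_trans ltr01).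
  rewrite (ord1 i) ger0_norm ?(Pv.1 j) //.
  exact: le_trans (Pspace_le1 _ j Pv) (ltW M1).
have -> : @Pspace R d = \bigcap_(y in [set: 'I_d]) [set v | 0 <= v 0 y]
    `&` [set v | \sum_(y < d) v 0 y = 1].
  by apply/seteqP; split => v [v0 v1]; split => // y; [move=> _|]; exact: v0.
apply: closedI.
  apply: closed_bigI => y _.
  apply: (@preimage_closed _ _ (fun v : 'rV[R]_d => v 0 y) [set r | 0 <= r]);
    last exact: closed_ge.
  by move=> v _; exact: coord_continuous.
apply: (@preimage_closed _ _ (fun v : 'rV[R]_d => \sum_(y < d) v 0 y) [set r | r = 1]);
  last exact: closed_eq.
by move=> v _; apply: continuous_sum => y; exact: coord_continuous.
Qed.

Lemma continuous_within_Pspace {f : 'rV[R]_d -> R} :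
  (forall v, Pspace v -> {for v, continuous f}) -> {within @Pspace R d, continuous f}.
Proof. by move=> fc; apply: continuous_in_subspaceT => v; rewrite inE => /fc. Qed.

Lemma bounded_on_Pspace {f : 'rV[R]_d -> R} : {within @Pspace R d, continuous f} ->
  exists C : R, forall v, Pspace v -> `|f v| <= C.
Proof.
move=> fc; have [M [Mreal HM]] := compact_bounded (continuous_compact fc compact_Pspace).
exists (`|M| + 1) => v Pv.
by apply: HM; [rewrite (le_lt_trans (real_ler_norm Mreal)) ?ltrDl|exists v].
Qed.

Definition neg_entropy v : R := \sum_(y < d) v 0 y * ln (v 0 y).

Lemma continuous_neg_entropy : continuous neg_entropy.
Proof.
move=> v; apply: continuous_sum => y.
apply: (@continuous_comp _ _ _ (fun w : 'rV[R]_d => w 0 y) (fun t : R => t * ln t)).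
  exact: coord_continuous.
exact: continuous_xlnx.
Qed.

Lemma sum_sqr_dev_ge v w y (e : R) : 0 <= e -> e <= `|w 0 y - v 0 y| ->
  e ^+ 2 <= \sum_(z < d) (w 0 z - v 0 z) ^+ 2.
Proof.
move=> e0 ey; apply: (@le_trans _ _ ((w 0 y - v 0 y) ^+ 2)).
  by rewrite -(real_normK (num_real (w 0 y - v 0 y))) lerXn2r ?nnegrE // (le_trans e0).
by rewrite (bigD1 y) //= lerDl sumr_ge0 // => z _; exact: sqr_ge0.
Qed.

(* near [v] use continuity; far from [v] the quadratic term dominates [2 sup |U|] *)
Lemma le_quadratic_dev {U : 'rV[R]_d -> R} {v} {eps : R} :
  Pspace v -> 0 < eps -> {for v, continuous U} ->
  (exists B : R, forall w, Pspace w -> `|U w| <= B) ->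
  exists C : R, 0 <= C /\ forall w, Pspace w ->
    U w <= U v + eps + C * \sum_(y < d) (w 0 y - v 0 y) ^+ 2.
Proof.
move=> Pv eps0 Uc [B HB].
have B0 : 0 <= B by apply: le_trans (HB v Pv).
have /cvgrPdist_lt/(_ eps eps0)/nbhs_ballP[de de0 Hde] := Uc.
have de2 : 0 < de ^+ 2 by rewrite exprn_gt0.
have C0 : 0 <= 2 * B / de ^+ 2 by apply: divr_ge0; [exact: mulr_ge0|exact: ltW].
exists (2 * B / de ^+ 2); split=> // w Pw.
have S0 : 0 <= \sum_(y < d) (w 0 y - v 0 y) ^+ 2.
  by apply: sumr_ge0 => y _; exact: sqr_ge0.
have CS0 := mulr_ge0 C0 S0.
have [/forallP near_v|/forallPn [y]] := boolP [forall y, `|v 0 y - w 0 y| < de].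
  have /Hde : ball v de w.
    rewrite mx_norm_ball /ball_; change (mx_norm (v - w) < de); rewrite mx_normrE.
    by apply: bigmax_lt => // -[i j] _ /=; rewrite (ord1 i) !mxE.
  by rewrite ltr_norml => /andP[h _]; lra.
rewrite -leNgt distrC => far.
have : 2 * B <= 2 * B / de ^+ 2 * \sum_(y < d) (w 0 y - v 0 y) ^+ 2.
  rewrite -mulrA -[leLHS]mulr1; apply: ler_wpM2l; first exact: mulr_ge0.
  by rewrite ler_pdivlMl // mulr1; exact: sum_sqr_dev_ge (ltW de0) far.
have := HB w Pw; have := HB v Pv; rewrite !ler_norml; lra.
Qed.

End simplex.

Section empirical.
Context {R : realType} {d N : nat}.
Local Notation conf := {ffun 'I_N -> 'I_d}.
Implicit Types (x : conf) (v : 'rV[R]_d).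

Lemma empiricalE x y :
  empirical R x 0 y = N%:R^-1 * \sum_(i < N) ((x i == y)%:R : R).
Proof. by rewrite mxE. Qed.

Hypothesis N_gt0 : (0 < N)%N.

Lemma sum_empirical x (f : 'I_d -> R) :
  \sum_(i < N) f (x i) = N%:R * \sum_y empirical R x 0 y * f y.
Proof.
have N0 : (N%:R : R) != 0 by rewrite pnatr_eq0 -lt0n.
transitivity (\sum_(i < N) \sum_y (x i == y)%:R * f y).
  apply: eq_bigr => i _; rewrite (bigD1 (x i)) //= eqxx mul1r big1 ?addr0 //.
  by move=> y /negbTE; rewrite eq_sym => ->; rewrite mul0r.
rewrite exchange_big mulr_sumr; apply: eq_bigr => y _.
by rewrite empiricalE mulrA mulrA mulfV // mul1r mulr_suml.
Qed.

Lemma Pspace_empirical x : Pspace (empirical R x).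
Proof.
split=> [y|]; first by rewrite empiricalE mulr_ge0 ?invr_ge0 ?sumr_ge0.
have := sum_empirical x (fun=> 1); rewrite sumr_const card_ord.
under [in X in _ = _ * X]eq_bigr do rewrite mulr1.
by rewrite -[LHS]mulr1 => /mulfI -> //; rewrite pnatr_eq0 -lt0n.
Qed.

Lemma empirical_gt0 x i : 0 < empirical R x 0 (x i).
Proof.
rewrite empiricalE mulr_gt0 ?invr_gt0 ?ltr0n // (bigD1 i) //= eqxx.
by rewrite ltr_pwDl // sumr_ge0.
Qed.

Lemma ln_iid_empirical x :
  ln (iid (fun y => empirical R x 0 y) x) = N%:R * neg_entropy (empirical R x).
Proof. by rewrite ln_prod => [|i]; [exact: sum_empirical|exact: empirical_gt0]. Qed.

(* the type of [x]: it determines [empirical R x], and there are at most (N+1)^d types *)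
Definition counts x : {ffun 'I_d -> 'I_N.+1} :=
  [ffun y => inord (\sum_(i < N) (x i == y))%N].

Lemma empirical_counts x y :
  empirical R x 0 y = N%:R^-1 * (counts x y : nat)%:R.
Proof.
rewrite empiricalE ffunE inordK ?natr_sum // ltnS.
apply: (@leq_trans (\sum_(i < N) 1)%N); first by apply: leq_sum => i _; exact: leq_b1.
by rewrite sum_nat_const card_ord muln1.
Qed.

Lemma sum_iid_empirical_le :
  \sum_(x : conf) iid (fun y => empirical R x 0 y) x <= N.+1%:R ^+ d.
Proof.
rewrite (partition_big counts xpredT) //=.
apply: le_trans (_ : \sum_(c : {ffun 'I_d -> 'I_N.+1}) 1 <= _); last first.
  by rewrite sumr_const card_ffun !card_ord natrX.
apply: ler_sum => c _.
have [x0 /eqP c0 | none] := pickP (fun x => counts x == c); last first.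
  by rewrite big_pred0 // => x; rewrite none.
rewrite -[leRHS](sum_iid (N:=N) (Pspace_empirical x0).2).
rewrite (eq_bigr (iid (fun y => empirical R x0 0 y))); last first.
  move=> x /eqP cx; congr iid; apply/funext => y.
  by rewrite !empirical_counts cx c0.
rewrite big_mkcond /=; apply: ler_sum => x _; case: ifP => // _.
exact: iid_ge0 (Pspace_empirical x0).1.
Qed.

Lemma sum_iid_empirical_dev2_le (p : 'I_d -> R) y : is_prob p ->
  \sum_(x : conf) iid p x * (empirical R x 0 y - p y) ^+ 2 <= N%:R^-1.
Proof.
move=> [p0 p1].
have N0 : (N%:R : R) != 0 by rewrite pnatr_eq0 -lt0n.
have py1 : p y <= 1 by rewrite -p1 (bigD1 y) //= lerDl sumr_ge0.
pose a z : R := (z == y)%:R - p y.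
have pa0 : \sum_z p z * a z = 0.
  rewrite /a; under eq_bigr do rewrite mulrBr.
  rewrite sumrB -mulr_suml p1 mul1r (bigD1 y) //= eqxx mulr1 big1 ?addr0 ?subrr //.
  by move=> z /negbTE ->; rewrite mulr0.
have devE x : empirical R x 0 y - p y = N%:R^-1 * \sum_i a (x i).
  rewrite empiricalE /a sumrB sumr_const card_ord -mulr_natl; field.
  exact: N0.
under eq_bigr do rewrite devE exprMn mulrCA.
rewrite -mulr_sumr sum_iid_sqr_sum // expr2 -mulrA mulKf //.
rewrite -[leRHS]mulr1; apply: ler_wpM2l; first by rewrite invr_ge0.
rewrite -p1; apply: ler_sum => z _.
rewrite ler_piMr // /a; have := p0 y; case: (z == y) => /=; nra.
Qed.

(* Gibbs' inequality against [x |-> prod_i L(x)_(x_i) / (N+1)^d], a subprobability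
   by [sum_iid_empirical_le] *)
Lemma neg_entropy_empirical_le (m : conf -> R) : is_prob m ->
  N%:R * \sum_(x : conf) m x * neg_entropy (empirical R x) - d%:R * ln (N.+1%:R)
    <= \sum_(x : conf) m x * ln (m x).
Proof.
move=> pm; have [_ m1] := pm.
pose D : R := N.+1%:R ^+ d.
have D0 : 0 < D by rewrite exprn_gt0 // ltr0n.
have iid_gt0 x : 0 < iid (fun y => empirical R x 0 y) x.
  by apply: prodr_gt0 => i _; exact: empirical_gt0.
pose s x := iid (fun y => empirical R x 0 y) x / D.
have s_gt0 x : 0 < s x by rewrite divr_gt0.
have s1 : \sum_(x : conf) s x <= 1.
  by rewrite -mulr_suml ler_pdivrMr // mul1r sum_iid_empirical_le.
have termE x : m x * ln (s x) =
    N%:R * (m x * neg_entropy (empirical R x)) - m x * (d%:R * ln N.+1%:R).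
  by rewrite ln_div ?posrE // ln_iid_empirical // lnXn ?ltr0n // -mulr_natl; ring.
apply: le_trans (gibbs_inequality pm (fun x => ltW (s_gt0 x)) (fun x _ => s_gt0 x) s1).
by rewrite (eq_bigr _ (fun x _ => termE x)) sumrB -mulr_sumr -mulr_suml m1 mul1r.
Qed.

Lemma sum_iid_quadratic_le {U : 'rV[R]_d -> R} {v} {eps C : R} :
  Pspace v -> 0 <= C ->
  (forall w, Pspace w -> U w <= U v + eps + C * \sum_(y < d) (w 0 y - v 0 y) ^+ 2) ->
  \sum_(x : conf) iid (fun y => v 0 y) x * U (empirical R x)
    <= U v + eps + C * d%:R / N%:R.
Proof.
move=> Pv C0 HU; have [v0 v1] := Pv.
apply: le_trans (_ : \sum_(x : conf) iid (fun y => v 0 y) x *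
    (U v + eps + C * \sum_(y < d) (empirical R x 0 y - v 0 y) ^+ 2) <= _).
  apply: ler_sum => x _; apply: ler_wpM2l; first exact: iid_ge0.
  exact: HU (Pspace_empirical x).
under eq_bigr do rewrite mulrDr.
rewrite big_split /= -mulr_suml sum_iid // mul1r lerD2l.
under eq_bigr do rewrite mulrCA mulr_sumr.
rewrite -mulr_sumr exchange_big /= -mulrA ler_wpM2l //.
rewrite -[d in d%:R](card_ord d) -sumr_const mulr_suml ler_sum // => y _.
by rewrite mul1r sum_iid_empirical_dev2_le.
Qed.

End empirical.

Section gibbs.
Context {R : realType} {d : nat} (K : 'rV[R]_d -> 'I_d -> R) {N : nat}.
Local Notation conf := {ffun 'I_N -> 'I_d}.
Implicit Types (x : conf) (m : conf -> R).

Lemma gibbsZ_gt0 x : 0 < gibbsZ K N.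
Proof. by rewrite /gibbsZ (bigD1 x) //= ltr_pwDl ?expR_gt0 // sumr_ge0. Qed.

Lemma gibbs_gt0 x : 0 < gibbs K x.
Proof. by rewrite divr_gt0 ?expR_gt0 ?(gibbsZ_gt0 x). Qed.

Lemma sum_gibbs_le1 : \sum_(x : conf) gibbs K x <= 1.
Proof.
have [x0 _|none] := pickP (fun _ : conf => true); last by rewrite big_pred0.
by rewrite -mulr_suml mulfV // lt0r_neq0 // (gibbsZ_gt0 x0).
Qed.

Lemma ln_gibbs x :
  ln (gibbs K x) = - (N%:R * Ufun K (empirical R x)) - ln (gibbsZ K N).
Proof. by rewrite ln_div ?posrE ?expR_gt0 ?(gibbsZ_gt0 x) // expRK. Qed.

Lemma rel_entropy_gibbsE m : is_prob m ->
  rel_entropy m (@gibbs R d K N) = \sum_(x : conf) m x * ln (m x)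
    + N%:R * \sum_(x : conf) m x * Ufun K (empirical R x) + ln (gibbsZ K N).
Proof.
move=> [m0 m1].
have termE x : m x * ln (m x / gibbs K x) = m x * ln (m x)
    + N%:R * (m x * Ufun K (empirical R x)) + m x * ln (gibbsZ K N).
  have [mx0|mx_neq0] := eqVneq (m x) 0; first by rewrite mx0 !(mul0r, mulr0, addr0).
  have mx_gt0 : 0 < m x by rewrite lt0r mx_neq0 m0.
  rewrite ln_div ?posrE ?gibbs_gt0 // (ln_gibbs x); ring.
rewrite /rel_entropy (eq_bigr _ (fun x _ => termE x)) !big_split /=.
by rewrite -mulr_sumr -mulr_suml m1 mul1r.
Qed.

(* Gibbs' inequality against the product measure v^N *)
Lemma ln_gibbsZ_ge (v : 'rV[R]_d) : Pspace v ->
  - (N%:R * neg_entropy v)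
    - N%:R * \sum_(x : conf) iid (fun y => v 0 y) x * Ufun K (empirical R x)
  <= ln (gibbsZ K N).
Proof.
move=> Pv; have [_ iid1] := is_prob_iid (N:=N) Pv.
have := gibbs_inequality (is_prob_iid (N:=N) Pv) (fun x => ltW (gibbs_gt0 x))
  (fun x _ => gibbs_gt0 x) sum_gibbs_le1.
rewrite sum_iid_mul_ln //; under eq_bigr do rewrite ln_gibbs mulrBr mulrN mulrCA.
by rewrite sumrB sumrN -mulr_sumr -mulr_suml iid1 mul1r /neg_entropy; lra.
Qed.

Lemma rel_entropy_gibbs_ge {m : conf -> R} {v : 'rV[R]_d} {eps C : R} :
  (0 < N)%N -> is_prob m -> Pspace v -> 0 <= C ->
  (forall w, Pspace w ->
    Ufun K w <= Ufun K v + eps + C * \sum_(y < d) (w 0 y - v 0 y) ^+ 2) ->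
  \sum_x m x * Ffun K (empirical R x) - Ffun K v - eps
    - (d%:R * ln N.+1%:R + C * d%:R) / N%:R
  <= N%:R^-1 * rel_entropy m (@gibbs R d K N).
Proof.
move=> N0 pm Pv C0 HU.
have n_gt0 : (0 : R) < N%:R by rewrite ltr0n.
have entropy_ge := neg_entropy_empirical_le N0 m pm.
have lnZ_ge := ln_gibbsZ_ge v Pv.
have energy_le := ler_wpM2l (ltW n_gt0) (sum_iid_quadratic_le N0 Pv C0 HU).
rewrite mulrDr mulrCA mulfV ?lt0r_neq0 // mulr1 in energy_le.
have sumF : \sum_x m x * Ffun K (empirical R x) =
    \sum_x m x * neg_entropy (empirical R x) + \sum_x m x * Ufun K (empirical R x).
  by rewrite -big_split; apply: eq_bigr => x _; rewrite /= -mulrDr.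
rewrite rel_entropy_gibbsE // ler_pdivlMl // !mulrBr mulrCA mulfV ?lt0r_neq0 // mulr1.
rewrite sumF (_ : Ffun K v = neg_entropy v + Ufun K v) //.
lra.
Qed.

End gibbs.

Lemma weak_cvg_integralBr {R : realType} {d : nat}
    {mu : forall N : nat, {ffun 'I_N -> 'I_d} -> R} {M : probability (@borelRd R d) R}
    {phi : 'rV[R]_d -> R} (c : R) :
  (forall N, is_prob (mu N)) -> weak_cvg_pushforward mu M ->
  {within @Pspace R d, continuous phi} ->
  (exists C : R, forall nu, Pspace nu -> `|phi nu| <= C) ->
  (\int[M]_(nu in (@Pspace R d : set (@borelRd R d))) (phi nu - c)%:E
    = \int[M]_(nu in (@Pspace R d : set (@borelRd R d))) (phi nu)%:E - c%:E)%E.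
Proof.
move=> mu_prob mu_cvg phi_cont [C phiC].
have phic_cont : {within @Pspace R d, continuous (fun nu => phi nu - c)}.
  by move=> nu; apply: continuousB; [exact: phi_cont|exact: cvg_cst].
have phic_bnd : exists C' : R, forall nu, Pspace nu -> `|phi nu - c| <= C'.
  by exists (C + `|c|) => nu Pnu; rewrite (le_trans (ler_normB _ _)) ?lerD2r ?phiC.
have seqE : (fun N => (\sum_x mu N x * (phi (empirical R x) - c))%:E) =
    (fun N => (\sum_x mu N x * phi (empirical R x))%:E - c%:E)%E.
  apply/funext => N; rewrite -EFinB; congr EFin.
  by rewrite (eq_bigr _ (fun x _ => mulrBr _ _ _)) sumrB -mulr_suml (mu_prob N).2 mul1r.
have := mu_cvg _ phic_cont phic_bnd; rewrite seqE => lhs_cvg.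
apply: (cvg_unique (@ereal_hausdorff R) lhs_cvg).
have phi_cvg := mu_cvg _ phi_cont (ex_intro _ C phiC).
by apply: cvgeB => //; [rewrite fin_num_adde_defl|exact: cvg_cst].
Qed.

Section free_energy.
Context {R : realType} {d : nat} {K : 'rV[R]_d -> 'I_d -> R}.
Hypothesis K_cont : forall x v, Pspace v -> {for v, continuous (fun mu => K mu x)}.

Lemma Ufun_continuous v : Pspace v -> {for v, continuous (Ufun K)}.
Proof.
move=> Pv; apply: continuous_sum => x.
by apply: continuousM; [exact: coord_continuous|exact: K_cont].
Qed.

Lemma Ffun_continuous : {within @Pspace R d, continuous (Ffun K)}.
Proof.
apply: continuous_within_Pspace => v Pv.
rewrite (_ : Ffun K = neg_entropy + Ufun K) //.
apply: continuousD; [exact: continuous_neg_entropy|exact: Ufun_continuous].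
Qed.

Lemma F0_approx {v0 : 'rV[R]_d} {eps : R} : Pspace v0 -> 0 < eps ->
  exists2 v, Pspace v & Ffun K v < F0 K + eps.
Proof.
move=> Pv0 eps0; have [C FC] := bounded_on_Pspace Ffun_continuous.
have hinf : has_inf [set Ffun K v | v in @Pspace R d].
  split; first by exists (Ffun K v0), v0.
  by exists (- C) => _ [v Pv <-]; have := FC v Pv; rewrite ler_norml => /andP[].
by have [_ [v Pv <-] Fv] := inf_adherent eps0 hinf; exists v.
Qed.

Lemma entropy_rate_ge (e : R) : (0 < d)%N -> 0 < e ->
  \forall N \near \oo, forall m : {ffun 'I_N -> 'I_d} -> R, is_prob m ->
    \sum_x m x * Ffun K (empirical R x) - (F0 K + e)
      <= N%:R^-1 * rel_entropy m (@gibbs R d K N).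
Proof.
move=> d_gt0 e0; pose eps := e / 3.
have eps0 : 0 < eps by rewrite divr_gt0.
pose x1 : {ffun 'I_1 -> 'I_d} := [ffun _ => Ordinal d_gt0].
have [v Pv Fv] := F0_approx (Pspace_empirical (ltn0Sn 0) x1) eps0.
have [C [C0 HU]] := le_quadratic_dev Pv eps0 (Ufun_continuous v Pv)
  (bounded_on_Pspace (continuous_within_Pspace Ufun_continuous)).
have := log_remainder_small (ler0n R d) (mulr_ge0 C0 (ler0n R d)) eps0.
apply: filter_app; exists 1%N => // N /= N_gt0 rem m pm.
have := rel_entropy_gibbs_ge K N_gt0 pm Pv C0 HU.
rewrite /eps in rem Fv *; lra.
Qed.

End free_energy.

Lemma is_prob_dim_gt0 {R : realType} {d N : nat} {m : {ffun 'I_N.+1 -> 'I_d} -> R} :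
  is_prob m -> (0 < d)%N.
Proof. by case/is_probW => x _; case: (x ord0) => y /(leq_ltn_trans (leq0n y)). Qed.

Theorem proposition3p9 (R : realType) (d : nat)
  (K : 'rV[R]_d -> 'I_d -> R)
  (HK : exists O : set 'rV[R]_d,
      open O /\ @Pspace R d `<=` O /\ forall x : 'I_d, C2_on O (fun mu => K mu x))
  (mu : forall N : nat, {ffun 'I_N -> 'I_d} -> R)
  (Hmu : forall N : nat, is_prob (mu N))
  (M : probability (@borelRd R d) R)
  (HM : M (@Pspace R d : set (@borelRd R d)) = 1%E)
  (Hcvg : weak_cvg_pushforward mu M) :
  ((\int[M]_(nu in (@Pspace R d : set (@borelRd R d))) (Ffun K nu - F0 K)%:E
      <= limn_einf (fun N : nat => ((N%:R)^-1 * rel_entropy (mu N) (@gibbs R d K N))%:E))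
   /\ \int[M]_(nu in (@Pspace R d : set (@borelRd R d))) (Ffun K nu - F0 K)%:E
      = \int[M]_(nu in (@Pspace R d : set (@borelRd R d))) (Ffun K nu)%:E - (F0 K)%:E)%E.
Proof.
have [U [_ [PU KC2]]] := HK.
have K_cont x v : Pspace v -> {for v, continuous (fun mu => K mu x)}.
  by move=> Pv; exact: (KC2 x).1 v (PU v Pv).
have F_cont := Ffun_continuous K_cont.
have F_bnd := bounded_on_Pspace F_cont.
have intE := weak_cvg_integralBr (F0 K) Hmu Hcvg F_cont F_bnd.
split=> //; rewrite intE.
apply: limn_einf_ge_shift (Hcvg _ F_cont F_bnd) _ => e e0.
have := entropy_rate_ge K_cont e (is_prob_dim_gt0 (Hmu 1%N)) e0.
by apply: filterS => N /(_ (mu N) (Hmu N)); rewrite lee_fin.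
Qed.
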